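(* Suppose Assumptions A1 and A2 hold. Then for all $k_1,k_2\in\{0,1,2,\dots\}$: 1. For $i\in\mathcal{D}$: $$\mathbb{E}\{d_i(k_1)d_i(k_2)\}=\delta(k_1-k_2)\,\alpha_i^2p_i(1-p_i)\,\mathbb{E}\{u^2(k_1-i)\}.$$ 2. For $i_1\neq i_2$ in $\mathcal{D}$: $$\mathbb{E}\{d_{i_1}(k_1)d_{i_2}(k_2)\}=-\delta(k_1-i_1-k_2+i_2)\,\alpha_{i_1}\alpha_{i_2}p_{i_1}p_{i_2}\,\mathbb{E}\{u^2(k_1-i_1)\}.$$
   Context: Setting. Fix $\bar\tau\ge1$ and $\mathcal{D}=\{0,\dots,\bar\tau\}$. A networked feedback system has a SISO discrete-time LTI plant $P$ with strictly proper transfer function and a SISO LTI controller $K$ with proper transfer function. The system is at rest at time $0$, so $u(n)=0$ and $v(n)=0$ for $n<0$. The plant input is $v(k)+u_d(k)$, where $v$ is the external input, and $u=Ky$ with $y$ the plant output. The receiver output is $$u_d(k)=\sum_{i=0}^{\bar\tau}\alpha_i\delta(\tau_{k-i}-i)u(k-i),$$ with fixed real weights $\alpha_i$ and Kronecker delta $\delta$. Assumptions. - A1: $\{\tau_n\}$ is i.i.d. on $\mathcal{D}$ with $\Pr\{\tau_n=i\}=p_i$, $\sum_ip_i=1$. Here it is indexed by all integers; negative-index delays only multiply $u(n)=0$ and do not affect the system. - A2: $\{v(k)\}$ is independent of $\{\tau_n\}$. Definitions. $\omega(k,n)=\alpha_i[\delta(\tau_n-i)-p_i]$ if $k=n+i$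 with $i\in\mathcal{D}$, and $\omega(k,n)=0$ otherwise. Set $d_i(k)=\omega(k,k-i)\,u(k-i)$ for $i\in\mathcal{D}$. *)

From HB Require Import structures.
From mathcomp Require Import all_boot all_order all_algebra.
From mathcomp Require Import all_classical all_reals all_analysis.
Set Implicit Arguments. Unset Strict Implicit. Unset Printing Implicit Defensive.
Import Order.TTheory GRing.Theory Num.Theory.
Local Open Scope classical_set_scope.
Local Open Scope ring_scope.

(* SISO discrete-time LTI system with rational transfer function Num(z)/Den(z),
   with the system at rest (signals indexed by all integers, zero in the far
   past): the input/output relation is the difference equation
   Den(q) y = Num(q) w, q the forward shift, i.e. for every integer k
     sum_j Den_j y(k + j - n) = sum_j Num_j w(k + j - n),  n = deg Den. *)
Definition lti_io (R : ringType) (Num Den : {poly R}) (w y : int -> R) : Prop :=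
  forall k : int,
    \sum_(j < size Den) Den`_j * y (k + j%:Z - (size Den).-1%:Z) =
    \sum_(j < size Num) Num`_j * w (k + j%:Z - (size Den).-1%:Z).

Definition strictly_proper_tf (R : ringType) (Num Den : {poly R}) : Prop :=
  Den != 0 /\ (size Num < size Den)%N.
Definition proper_tf (R : ringType) (Num Den : {poly R}) : Prop :=
  Den != 0 /\ (size Num <= size Den)%N.

Definition receiver (R : ringType) (tb : nat) (alpha : 'I_tb.+1 -> R)
  (tau : int -> 'I_tb.+1) (u : int -> R) (k : int) : R :=
  \sum_(i < tb.+1) alpha i * (tau (k - i%:Z) == i)%:R * u (k - i%:Z).

(* omega(k,n) = alpha_i [delta(tau_n - i) - p_i] if k = n + i with i in D,
   and 0 otherwise (one sample path) *)
Definition omega (R : ringType) (tb : nat) (alpha p : 'I_tb.+1 -> R)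
  (tau : int -> 'I_tb.+1) (k n : int) : R :=
  match k - n with
  | Posz m => if (m <= tb)%N then
                alpha (inord m) * ((tau n == inord m)%:R - p (inord m))
              else 0
  | Negz _ => 0
  end.

Definition dsig (R : ringType) (T : Type) (tb : nat) (alpha p : 'I_tb.+1 -> R)
  (tau : int -> T -> 'I_tb.+1) (u : int -> T -> R) (i : 'I_tb.+1) (k : int)
  (w : T) : R :=
  omega alpha p (fun n => tau n w) k (k - i%:Z) * u (k - i%:Z) w.

Section Assumptions.
Context {d} {T : measurableType d} {R : realType} (P : probability T R).

(* A1: {tau_n}_{n in Z} i.i.d. on D with Pr{tau_n = i} = p_i:
   the events {tau_n = i} are measurable and for every finite set s of
   distinct indices and every choice f of values,
   Pr( /\_{n in s} tau_n = f n ) = prod_{n in s} p_(f n). *)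
Definition A1_iid (tb : nat) (tau : int -> T -> 'I_tb.+1)
  (p : 'I_tb.+1 -> R) : Prop :=
  (forall (n : int) (i : 'I_tb.+1), measurable [set w | tau n w = i]) /\
  (forall (s : seq int) (f : int -> 'I_tb.+1), uniq s ->
     P (\big[setI/setT]_(n <- s) [set w | tau n w = f n])
     = (\prod_(n <- s) p (f n))%:E).

(* A2: the process {v(k)} is independent of {tau_n}: the generating
   pi-systems (finite intersections of events {tau_n = i}, resp. of events
   {v(k) in B} with B Borel) are independent. *)
Definition A2_indep (tb : nat) (tau : int -> T -> 'I_tb.+1)
  (v : int -> T -> R) : Prop :=
  forall (s : seq int) (f : int -> 'I_tb.+1)
         (m : nat) (ks : 'I_m -> int) (Bs : 'I_m -> set R),
    (forall j, measurable (Bs j)) ->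
    let Atau := \big[setI/setT]_(n <- s) [set w | tau n w = f n] in
    let Av := \big[setI/setT]_(j < m) (v (ks j) @^-1` Bs j) in
    P (Atau `&` Av) = (P Atau * P Av)%E.

End Assumptions.

From HB Require Import structures.
From mathcomp Require Import all_boot all_order all_algebra.
From mathcomp Require Import all_classical all_reals all_analysis.
From mathcomp Require Import measurable_realfun.
From mathcomp Require Import zify ring lra.
Set Implicit Arguments. Unset Strict Implicit. Unset Printing Implicit Defensive.
Import Order.TTheory GRing.Theory Num.Theory.
Local Open Scope classical_set_scope.
Local Open Scope ring_scope.

(* Let F_n be the sigma-algebra generated by the input v and by the delays
   tau_m, m <> n (below: [sigma_excl n], generated by [cyl_excl n]).  By A1
   and A2 the event {tau_n = a} is independent of the pi-system of cylinder
   events generating F_n, hence of F_n itself, so E[1{tau_n = a} Z] = p_a E[Z]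
   for every F_n-measurable integrable Z.  Since the plant is strictly proper
   and the controller proper, u(k) for k <= n is computed from v and from the
   tau_m with m < n only, so it is F_n-measurable.  Now
   d_i(k) = alpha_i (1{tau_(k-i) = i} - p_i) u(k-i).  In a product
   d_i1(k1) d_i2(k2) with k1 - i1 < k2 - i2 the centred factor of tau_(k2-i2)
   multiplies an F_(k2-i2)-measurable variable, so the mean vanishes; when
   k1 - i1 = k2 - i2 = n one uses
   E[(1{tau_n = a} - p_a) (1{tau_n = b} - p_b) Z] = (delta_ab p_a - p_a p_b) E[Z]. *)

Lemma bigsetI_seqP (I : choiceType) (U : Type) (s : seq I) (F : I -> set U) x :
  (\big[setI/setT]_(i <- s) F i) x <-> (forall i, i \in s -> F i x).
Proof. by rewrite -bigcap_seq. Qed.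

Section ge0_integral_mrestr.
Local Open Scope ereal_scope.
Context d (T : measurableType d) (R : realType).
Variables (m : {measure set T -> \bar R}) (D : set T) (mD : measurable D).
Import HBNNSimple.

Let integral_mrestr_nnsfun (h : {nnsfun T >-> R}) :
  \int[mrestr m mD]_x (h x)%:E = \int[m]_(x in D) (h x)%:E.
Proof.
under [LHS]eq_integral do rewrite fimfunE -fsumEFin//.
under [RHS]eq_integral do rewrite fimfunE -fsumEFin//.
rewrite [LHS]ge0_integral_fsum//; last 2 first.
  - by move=> r; exact/measurable_EFinP/measurableT_comp.
  - by move=> n x _; rewrite EFinM nnfun_muleindic_ge0.
rewrite [RHS]ge0_integral_fsum//; last 2 first.
  - by move=> r; exact/measurable_EFinP/measurableT_comp.
  - by move=> n x _; rewrite EFinM nnfun_muleindic_ge0.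
apply: eq_fsbigr => r _; rewrite !integralZl_indic_nnsfun//.
by rewrite !integral_indic// /mrestr setIT.
Qed.

Lemma ge0_integral_mrestr (f : T -> \bar R) : measurable_fun setT f ->
  (forall x, 0 <= f x) -> \int[mrestr m mD]_x f x = \int[m]_(x in D) f x.
Proof.
move=> mf f0; pose f_ := nnsfun_approx measurableT mf.
have cvg_f_ x : f x = limn (fun n => (f_ n x)%:E).
  by apply/esym/cvg_lim => //; exact: cvg_nnsfun_approx.
have nd_f_ x : {homo (fun n => (f_ n x)%:E) : a b / (a <= b)%N >-> a <= b}.
  by move=> a b ab; rewrite lee_fin; exact/lefP/nd_nnsfun_approx.
transitivity (limn (fun n => \int[mrestr m mD]_x (f_ n x)%:E)).
  rewrite -monotone_convergence//=; last 2 first.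
  - by move=> n; exact/measurable_EFinP.
  - by move=> n x _; rewrite lee_fin.
  by apply: eq_integral => x _; rewrite cvg_f_.
transitivity (limn (fun n => \int[m]_(x in D) (f_ n x)%:E)).
  by congr (limn _); apply/funext => n; rewrite integral_mrestr_nnsfun.
rewrite -monotone_convergence//=; last 2 first.
- by move=> n; exact/measurable_EFinP/measurable_funTS.
- by move=> n x _; rewrite lee_fin.
by apply: eq_integral => x _; rewrite cvg_f_.
Qed.

End ge0_integral_mrestr.

Lemma measurable_id_g_sigma d (T : measurableType d) (G : set (set T)) :
  G `<=` measurable -> measurable_fun setT (id : T -> g_sigma_algebraType G).
Proof.
move=> Gm _ A mA; rewrite setTI.
exact: (smallest_sub (@sigma_algebra_measurable _ T) Gm).
Qed.

Section independent_event.
Local Open Scope ereal_scope.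
Context d (T : measurableType d) (R : realType) (P : probability T R).
Variables (G : set (set T)) (E : set T) (c : R).
Hypotheses (Gm : G `<=` measurable) (GI : setI_closed G) (GT : G setT).
Hypotheses (mE : measurable E) (PGE : forall A, G A -> P (A `&` E) = c%:E * P A).
Local Notation TG := (g_sigma_algebraType G).

Let c_ge0 : (0 <= c)%R.
Proof.
by rewrite -lee_fin -[c%:E]mule1 -(probability_setT P) -PGE// setTI measure_ge0.
Qed.

Lemma indep_g_sigma A : <<s G >> A -> P (A `&` E) = c%:E * P A.
Proof.
apply: (g_sigma_algebra_measure_unique G Gm (fun=> setT) _ _
  (mrestr P mE) (mscale (NngNum c_ge0) P)) => //.
- by rewrite bigcup_const.
- move=> _; rewrite /mrestr (le_lt_trans (probability_le1 _ _)) ?ltry//.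
  exact: measurableI.
Qed.

Lemma ge0_integral_indep (f : TG -> \bar R) : measurable_fun setT f ->
  (forall x, 0 <= f x) -> \int[P]_(x in E) f x = c%:E * \int[P]_x f x.
Proof.
move=> mf f0; have mid := measurable_id_g_sigma Gm.
(* the measure structure of [pushforward] takes the measurability proof *)
pose PG := measure_function_pushforward__canonical__measure_function_Measure P mid.
pose PEG := measure_function_pushforward__canonical__measure_function_Measure
  (mrestr P mE) mid.
rewrite -ge0_integral_mrestr//; last exact: measurableT_comp mf mid.
transitivity (\int[PEG]_x f x); first by rewrite ge0_integral_pushforward.
rewrite (eq_measure_integral (mscale (NngNum c_ge0) PG)); last first.
  by move=> A mA _; exact: indep_g_sigma.
by rewrite ge0_integral_mscale// ge0_integral_pushforward.
Qed.

Lemma expectation_indicM_indep (Z : TG -> R) : measurable_fun setT Z ->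
  P.-integrable setT (EFin \o Z) -> 'E_P[\1_E \* Z] = c%:E * 'E_P[Z].
Proof.
move=> mZ iZ; have ZE : \int[P]_(x in E) (Z x)%:E = 'E_P[\1_E \* Z].
  rewrite unlock integral_mkcond epatch_indic; apply: eq_integral => x _.
  by rewrite /= -EFinM mulrC.
rewrite -ZE unlock integralE [in RHS]integralE.
rewrite !ge0_integral_indep//; last 2 first.
- exact/measurable_funeneg/measurable_EFinP.
- exact/measurable_funepos/measurable_EFinP.
rewrite [RHS]muleBr//.
exact: fin_num_adde_defr (integrable_pos_fin_num measurableT iZ).
Qed.

End independent_event.

Section integrable_products.
Context d (T : measurableType d) (R : realType) (mu : {measure set T -> \bar R}).

Lemma integrable_bounded_mulr (h f : T -> R) (M : R) :
  measurable_fun setT h -> (forall x, `|h x| <= M) ->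
  mu.-integrable setT (EFin \o f) -> mu.-integrable setT (EFin \o (h \* f)).
Proof.
move=> mh hM if_; have mf := measurable_int _ if_.
apply: le_integrable (integrableZl measurableT M if_) => //.
  by apply/measurable_EFinP/measurable_funM => //; exact/measurable_EFinP.
move=> x _; rewrite lee_fin !normrM ler_wpM2r//.
exact: le_trans (hM x) (ler_norm _).
Qed.

Lemma integrable_mul_sqr (f g : T -> R) :
  measurable_fun setT f -> measurable_fun setT g ->
  mu.-integrable setT (fun x => (f x ^+ 2)%:E) ->
  mu.-integrable setT (fun x => (g x ^+ 2)%:E) ->
  mu.-integrable setT (EFin \o (f \* g)).
Proof.
move=> mf mg if2 ig2; apply: le_integrable (integrableD measurableT if2 ig2) => //.
  exact/measurable_EFinP/measurable_funM.
move=> x _; rewrite -EFinD abse_EFin lee_fin normrM.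
rewrite [X in _ <= X]ger0_norm ?addr_ge0 ?sqr_ge0//.
rewrite -(real_normK (num_real (f x))) -(real_normK (num_real (g x))).
have := sqr_ge0 (`|f x| - `|g x|); have := normr_ge0 (f x); have := normr_ge0 (g x).
nra.
Qed.

End integrable_products.

Lemma lti_io_output (F : fieldType) (Num Den : {poly F}) (w y : int -> F) k :
  Den != 0 -> lti_io Num Den w y ->
  let dn := (size Den).-1 in
  y k = (lead_coef Den)^-1 * (\sum_(j < size Num) Num`_j * w (k + j%:Z - dn%:Z)
                             - \sum_(j < dn) Den`_j * y (k + j%:Z - dn%:Z)).
Proof.
move=> Den0 io dn; have szDen : size Den = dn.+1.
  by rewrite prednK// size_poly_gt0.
move: (io k); rewrite -/dn szDen big_ord_recr /=.
rewrite addrK => <-; rewrite addrAC subrr add0r.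
by rewrite [lead_coef _]/(Den`_dn) mulKf// -/(lead_coef Den) lead_coef_eq0.
Qed.

Lemma measurable_lti_io_output d (T : measurableType d) (R : realType)
    (Num Den : {poly R}) (w y : int -> T -> R) (k : int) :
  Den != 0 -> (forall t, lti_io Num Den (w^~ t) (y^~ t)) ->
  (forall m : int, m < k -> measurable_fun setT (y m)) ->
  (forall m : int, m < k + (size Num)%:Z - (size Den).-1%:Z ->
     measurable_fun setT (w m)) ->
  measurable_fun setT (y k).
Proof.
move=> Den0 io my mw.
have -> : y k = _ := funext (fun t => lti_io_output k Den0 (io t)).
apply: measurable_funM => //; apply: measurable_funB; apply: measurable_sum => j.
  by apply: measurable_funM => //; apply: mw; rewrite ltrD2r ltrD2l ltz_nat.
by apply: measurable_funM => //; apply: my; rewrite ltrBlDr ltrD2l ltz_nat.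
Qed.

Section delay_independence.
Context (tb : nat) (R : realType) d (T : measurableType d) (P : probability T R)
  (p : 'I_tb.+1 -> R) (tau : int -> T -> 'I_tb.+1) (v : int -> T -> R).
Hypothesis tau_meas : forall n i, measurable [set w | tau n w = i].
Hypothesis tau_iid : forall (s : seq int) (f : int -> 'I_tb.+1), uniq s ->
  P (\big[setI/setT]_(n <- s) [set w | tau n w = f n]) = (\prod_(n <- s) p (f n))%:E.
Hypothesis tau_v_indep : A2_indep P tau v.
Hypothesis v_meas : forall k, measurable_fun setT (v k).

Definition tau_cyl (s : seq int) (f : int -> 'I_tb.+1) : set T :=
  \big[setI/setT]_(m <- s) [set w | tau m w = f m].

Definition v_cyl M (ks : 'I_M -> int) (Bs : 'I_M -> set R) : set T :=
  \big[setI/setT]_(j < M) (v (ks j) @^-1` Bs j).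

Lemma tau_cylP s f w : tau_cyl s f w <-> forall m, m \in s -> tau m w = f m.
Proof. exact: bigsetI_seqP. Qed.

Lemma tau_cylI s1 f1 s2 f2 : (forall m, m \in s1 -> m \in s2 -> f1 m = f2 m) ->
  tau_cyl s1 f1 `&` tau_cyl s2 f2
  = tau_cyl (undup (s1 ++ s2)) (fun m => if m \in s1 then f1 m else f2 m).
Proof.
move=> f12; apply/seteqP; split => w.
  move=> [/tau_cylP h1 /tau_cylP h2]; apply/tau_cylP => m; rewrite mem_undup mem_cat.
  by case: ifP => [ms1 _|_ /= ms2]; [exact: h1|exact: h2].
move=> /tau_cylP h; split; apply/tau_cylP => m ms.
  by have := h m; rewrite mem_undup mem_cat ms => ->.
have := h m; rewrite mem_undup mem_cat ms orbT => /(_ isT) ->.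
by case: ifP => // ms1; exact: f12.
Qed.

Lemma tau_cylI0 s1 f1 s2 f2 m : m \in s1 -> m \in s2 -> f1 m != f2 m ->
  tau_cyl s1 f1 `&` tau_cyl s2 f2 = set0.
Proof.
move=> ms1 ms2 /eqP f12; apply/seteqP; split => // w [/tau_cylP h1 /tau_cylP h2].
by apply: f12; rewrite -h1// -h2.
Qed.

Lemma v_cylI M1 M2 (ks1 : 'I_M1 -> int) (ks2 : 'I_M2 -> int) Bs1 Bs2 :
  v_cyl ks1 Bs1 `&` v_cyl ks2 Bs2 =
  v_cyl (fun j => match fintype.split j with inl a => ks1 a | inr b => ks2 b end)
        (fun j => match fintype.split j with inl a => Bs1 a | inr b => Bs2 b end).
Proof.
rewrite /v_cyl big_split_ord.
congr (_ `&` _); apply: eq_bigr => j _.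
  by move: (unsplitK (inl j : 'I_M1 + 'I_M2)) => /= ->.
by move: (unsplitK (inr j : 'I_M1 + 'I_M2)) => /= ->.
Qed.

(* [set0] is added to make the family closed under intersection. *)
Definition cyl_excl (n : int) : set (set T) :=
  [set S | S = set0 \/ exists s f M ks Bs, [/\ uniq s, n \notin s,
     forall j : 'I_M, measurable (Bs j) & S = tau_cyl s f `&` v_cyl ks Bs]].

Lemma cyl_excl_setI_closed n : setI_closed (cyl_excl n).
Proof.
move=> A B [->|[s1 [f1 [M1 [ks1 [Bs1 [_ n1 mB1 ->]]]]]]]; first by left; rewrite set0I.
move=> [->|[s2 [f2 [M2 [ks2 [Bs2 [_ n2 mB2 ->]]]]]]]; first by left; rewrite setI0.
rewrite setIACA v_cylI.
have [[m /and3P[ms1 ms2 ne]]|agree] :=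
  pselect (exists m, [&& m \in s1, m \in s2 & f1 m != f2 m]).
  by left; rewrite (tau_cylI0 ms1 ms2 ne) set0I.
rewrite tau_cylI; last first.
  move=> m ms1 ms2; apply/eqP/negPn/negP => ne; apply: agree.
  by exists m; rewrite ms1 ms2 ne.
right; do 5 eexists; split; last reflexivity.
- exact: undup_uniq.
- by rewrite mem_undup mem_cat negb_or n1 n2.
- by move=> j /=; case: (fintype.split j) => [a|b]; [exact: mB1|exact: mB2].
Qed.

Lemma cyl_excl_setT n : cyl_excl n setT.
Proof.
right; exists [::], (fun=> ord0), 0%N, (fun=> 0), (fun=> setT); split => //.
by rewrite /tau_cyl /v_cyl big_nil big_ord0 setIT.
Qed.

Lemma cyl_excl_measurable n : cyl_excl n `<=` measurable.
Proof.
move=> _ [->|[s [f [M [ks [Bs [_ _ mB ->]]]]]]]; first exact: measurable0.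
apply: measurableI; first by apply: bigsetI_measurable => m _; exact: tau_meas.
by apply: bigsetI_measurable => j _; rewrite -[_ @^-1` _]setTI; exact: v_meas.
Qed.

Lemma cyl_excl_indep n a S : cyl_excl n S ->
  P (S `&` [set w | tau n w = a]) = ((p a)%:E * P S)%E.
Proof.
move=> [->|[s [f [M [ks [Bs [us ns mB ->]]]]]]]; first by rewrite set0I !measure0 mule0.
pose f' m := if m == n then a else f m.
have f'E : {in s, f' =1 f}.
  by move=> m ms; rewrite /f'; case: eqP => // mn; move: ns; rewrite -mn ms.
have -> : tau_cyl s f `&` v_cyl ks Bs `&` [set w | tau n w = a] =
          tau_cyl (n :: s) f' `&` v_cyl ks Bs.
  rewrite setIAC /tau_cyl big_cons [X in X `&` _]setIC /f' eqxx.
  by congr (_ `&` _ `&` _); apply: eq_big_seq => m ms; rewrite -/(f' m) f'E.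
have /= -> := @tau_v_indep (n :: s) f' M ks Bs mB.
have /= -> := @tau_v_indep s f M ks Bs mB.
rewrite !tau_iid ?[uniq _]/= ?ns// big_cons /f' eqxx EFinM muleA.
by congr (_ * _%:E * _)%E; apply: eq_big_seq => m ms; rewrite -/(f' m) f'E.
Qed.

Local Notation sigma_excl n := (g_sigma_algebraType (cyl_excl n)).

Lemma tau_indicE n a w : (tau n w == a)%:R = \1_[set w | tau n w = a] w :> R.
Proof.
by rewrite indicE; case: (tau n w =P a) => [e|ne]; [rewrite mem_set|rewrite memNset].
Qed.

Lemma measurable_tau_indic n a : measurable_fun setT (fun w => (tau n w == a)%:R : R).
Proof. by under eq_fun do rewrite tau_indicE; exact: measurable_indic. Qed.

Lemma measurable_tau_indic_excl n m a : m != n ->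
  measurable_fun setT ((fun w => (tau m w == a)%:R) : sigma_excl n -> R).
Proof.
move=> mn; under eq_fun do rewrite tau_indicE.
apply: measurable_indic; apply: sub_sigma_algebra; right.
exists [:: m], (fun=> a), 0%N, (fun=> 0), (fun=> setT); split => //.
- by rewrite inE eq_sym.
- by rewrite /tau_cyl /v_cyl big_seq1 big_ord0 setIT.
Qed.

Lemma measurable_v_excl n m : measurable_fun setT (v m : sigma_excl n -> R).
Proof.
move=> _ B mB; apply: sub_sigma_algebra; right.
exists [::], (fun=> ord0), 1%N, (fun=> m), (fun=> B); split => //.
by rewrite /tau_cyl /v_cyl big_nil big_ord1.
Qed.

Lemma expectation_tau_combM n a1 a2 (c1 c2 c0 : R) (Z : sigma_excl n -> R) :
  measurable_fun setT Z -> P.-integrable setT (EFin \o Z) ->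
  ('E_P[fun w => ((c1 * (tau n w == a1)%:R + c2 * (tau n w == a2)%:R + c0) * Z w)%R]
   = (c1 * p a1 + c2 * p a2 + c0)%:E * 'E_P[Z])%E.
Proof.
move=> mZ iZ.
have EXZ a : ('E_P[fun w => ((tau n w == a)%:R * Z w)%R] = (p a)%:E * 'E_P[Z])%E.
  rewrite -(expectation_indicM_indep (@cyl_excl_measurable n) (@cyl_excl_setI_closed n)
    (@cyl_excl_setT n) (tau_meas n a) (@cyl_excl_indep n a) mZ iZ).
  by congr (expectation P _); apply/funext => w /=; rewrite tau_indicE.
have LXZ a : (fun w => (tau n w == a)%:R * Z w) \in Lfun P 1.
  apply/Lfun1_integrable; apply: (integrable_bounded_mulr (M := 1)) => //.
    exact: measurable_tau_indic.
  by move=> w; case: (_ == _); rewrite ?normr1 ?normr0.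
have LZ : Z \in Lfun P 1 by exact/Lfun1_integrable.
rewrite (_ : (fun w => _) = (c1 \o* (fun w => (tau n w == a1)%:R * Z w))
   \+ (c2 \o* (fun w => (tau n w == a2)%:R * Z w)) \+ (c0 \o* Z)); last first.
  by apply/funext => w /=; ring.
rewrite !expectationD ?rpredD ?Lfun_scale// !expectationZl// !EXZ.
have := expectation_fin_num LZ; case: ('E_P[Z])%E => // r _.
by rewrite -!EFinM -!EFinD; congr EFin; ring.
Qed.

Section closed_loop.
Variables (alpha : 'I_tb.+1 -> R) (NP DP NK DK : {poly R}) (u y : int -> T -> R).
Hypotheses (plant_sp : strictly_proper_tf NP DP) (ctrl_p : proper_tf NK DK).
Hypothesis at_rest : forall (n : int) w, n < 0 -> u n w = 0 /\ v n w = 0 /\ y n w = 0.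
Hypothesis plant : forall w, lti_io NP DP
  (fun k => v k w + receiver alpha (fun n => tau n w) (fun n => u n w) k)
  (fun k => y k w).
Hypothesis ctrl : forall w, lti_io NK DK (fun k => y k w) (fun k => u k w).

Lemma measurable_receiver_excl (n k : int) : k < n ->
    (forall m : int, m <= k -> measurable_fun setT (u m : sigma_excl n -> R)) ->
  measurable_fun setT
    ((fun w => receiver alpha (fun m => tau m w) (fun m => u m w) k)
       : sigma_excl n -> R).
Proof.
move=> kn mu; apply: measurable_sum => i.
have kik : k - i%:Z <= k by rewrite gerDl oppr_le0.
apply: measurable_funM; last exact: mu.
apply: measurable_funM => //; apply: measurable_tau_indic_excl.
by rewrite lt_eqF// (le_lt_trans kik).
Qed.

Lemma measurable_yu_excl (n : int) (N : nat) (k : int) : k < N%:Z -> k <= n ->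
  measurable_fun setT (y k : sigma_excl n -> R) /\
  measurable_fun setT (u k : sigma_excl n -> R).
Proof.
elim: N k => [|N IH] k kN kn.
  have zero (f : T -> R) :
      (forall w, f w = 0) -> measurable_fun setT (f : sigma_excl n -> R).
    by move=> f0; rewrite (funext f0); exact: measurable_cst.
  by split; apply: zero => w; have [? [? ?]] := at_rest w kN.
have [kN'|] := ltP k N%:Z; first exact: IH.
move=> Nk; have {kN Nk} kN : k = N%:Z by lia.
subst k.
have [DP0 szP] := plant_sp; have [DK0 szK] := ctrl_p.
have IHyu (m : int) : m < N%:Z -> measurable_fun setT (y m : sigma_excl n -> R) /\
    measurable_fun setT (u m : sigma_excl n -> R).
  by move=> mN; apply: (IH m mN); lia.
have IHy m mN := proj1 (IHyu m mN).
have IHu m mN := proj2 (IHyu m mN).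
have yN : measurable_fun setT (y N%:Z : sigma_excl n -> R).
  apply: (measurable_lti_io_output (T := sigma_excl n) DP0 plant) => // m mN.
  have {mN} mN : m < N%:Z.
    by move: (size NP) szP mN => sNP; case: (size DP) => // dP; rewrite ltnS /=; lia.
  apply: measurable_funD; first exact: measurable_v_excl.
  by apply: measurable_receiver_excl; [lia|move=> m' m'm; apply: IHu; lia].
split => //; apply: (measurable_lti_io_output (T := sigma_excl n) DK0 ctrl) => // m mN.
have {mN} : m <= N%:Z.
  by move: (size NK) szK mN => sNK; case: (size DK) => [|dK]; rewrite ?ltnS /=; lia.
by rewrite le_eqVlt => /predU1P[->|/IHy].
Qed.

Lemma measurable_u_excl (n k : int) :
  k <= n -> measurable_fun setT (u k : sigma_excl n -> R).
Proof. by move=> kn; apply: (proj2 (@measurable_yu_excl n `|k|.+1 k _ kn)); lia. Qed.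

Hypothesis u_meas : forall k, measurable_fun setT (u k).
Hypothesis u_sq : forall k, P.-integrable setT (fun w => (u k w ^+ 2)%:E).

Lemma dsigE i (k : int) w : dsig alpha p tau u i k w =
  alpha i * ((tau (k - i%:Z) w == i)%:R - p i) * u (k - i%:Z) w.
Proof.
rewrite /dsig /omega (_ : k - (k - i%:Z) = Posz i); last by rewrite opprB addrC subrK.
by rewrite /= -ltnS ltn_ord inord_val.
Qed.

Lemma expectation_centered_cross (n1 n2 : int) a1 a2 (c1 c2 : R) : n1 < n2 ->
  ('E_P[fun w => ((c1 * ((tau n1 w == a1)%:R - p a1) * u n1 w) *
                  (c2 * ((tau n2 w == a2)%:R - p a2) * u n2 w))%R] = 0)%E.
Proof.
move=> n12; pose Z w := c1 * ((tau n1 w == a1)%:R - p a1) * u n1 w * (c2 * u n2 w).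
have mZ : measurable_fun setT (Z : sigma_excl n2 -> R).
  apply: measurable_funM.
    apply: measurable_funM; last exact: measurable_u_excl (ltW n12).
    apply: measurable_funM => //; apply: measurable_funB => //.
    by apply: measurable_tau_indic_excl; rewrite lt_eqF.
  by apply: measurable_funM => //; exact: measurable_u_excl.
have iZ : P.-integrable setT (EFin \o Z).
  rewrite (_ : Z = (fun w => c1 * c2 * ((tau n1 w == a1)%:R - p a1)) \* (u n1 \* u n2)).
    apply: (integrable_bounded_mulr (M := `|c1 * c2| * (1 + `|p a1|))).
    - apply: measurable_funM => //; apply: measurable_funB => //.
      exact: measurable_tau_indic.
    - move=> w; rewrite normrM ler_wpM2l// (le_trans (ler_normB _ _))// lerD2r.
      by case: (_ == _); rewrite ?normr1 ?normr0.
    - exact: integrable_mul_sqr.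
  by apply/funext => w /=; rewrite /Z; ring.
rewrite (_ : (fun w => _) = fun w => ((1 * (tau n2 w == a2)%:R + 0 * (tau n2 w == a2)%:R
                                       + - p a2) * Z w)%R); last first.
  by apply/funext => w; rewrite /Z; ring.
rewrite expectation_tau_combM//.
by rewrite (_ : 1 * p a2 + 0 * p a2 + - p a2 = 0) ?mul0e//; ring.
Qed.

Lemma expectation_centered_sq (n : int) a1 a2 (c : R) :
  ('E_P[fun w => (c * (((tau n w == a1)%:R - p a1) * ((tau n w == a2)%:R - p a2))
                  * u n w ^+ 2)%R]
   = (c * ((a1 == a2)%:R * p a1 - p a1 * p a2))%:E * 'E_P[fun w => (u n w ^+ 2)%R])%E.
Proof.
rewrite (_ : (fun w => _) = fun w => ((c * ((a1 == a2)%:R - p a2) * (tau n w == a1)%:R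
    + (- c * p a1) * (tau n w == a2)%:R + c * p a1 * p a2) * u n w ^+ 2)%R).
  rewrite expectation_tau_combM//; first by congr (_%:E * _)%E; ring.
  - by apply: measurable_funX; exact: measurable_u_excl.
  - exact: u_sq.
apply/funext => w; congr (_ * _).
by case: (eqVneq (tau n w) a1) => [e|_]; rewrite ?e /=; ring.
Qed.

Lemma expectation_dsigM i1 i2 (k1 k2 : int) :
  ('E_P[fun w => (dsig alpha p tau u i1 k1 w * dsig alpha p tau u i2 k2 w)%R]
   = ((k1 - i1%:Z == k2 - i2%:Z)%:R * alpha i1 * alpha i2
      * ((i1 == i2)%:R * p i1 - p i1 * p i2))%:E
     * 'E_P[fun w => (u (k1 - i1%:Z) w ^+ 2)%R])%E.
Proof.
under eq_fun do rewrite !dsigE.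
case: ltgtP => [lt|gt|<-].
- by rewrite expectation_centered_cross// !mul0r mul0e.
- under eq_fun do rewrite mulrC.
  by rewrite expectation_centered_cross// !mul0r mul0e.
have reorder (c1 c2 x1 x2 z : R) :
  c1 * x1 * z * (c2 * x2 * z) = c1 * c2 * (x1 * x2) * z ^+ 2 by ring.
under eq_fun do rewrite reorder.
by rewrite expectation_centered_sq /=; congr (_%:E * _)%E; ring.
Qed.

End closed_loop.

End delay_independence.

Theorem lemma3p4 (tb : nat) (htb : (1 <= tb)%N)
  (R : realType) (d : measure_display) (T : measurableType d)
  (P : probability T R)
  (alpha p : 'I_tb.+1 -> R)
  (NP DP NK DK : {poly R})
  (tau : int -> T -> 'I_tb.+1) (v u y : int -> T -> R) :
  \sum_(i < tb.+1) p i = 1 ->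
  strictly_proper_tf NP DP ->
  proper_tf NK DK ->
  (* system at rest at time 0 *)
  (forall (n : int) w, n < 0 -> u n w = 0 /\ v n w = 0 /\ y n w = 0) ->
  (* closed loop: y = P (v + u_d), u = K y, u_d the receiver output *)
  (forall w, lti_io NP DP
       (fun k => v k w + receiver alpha (fun n => tau n w) (fun n => u n w) k)
       (fun k => y k w)) ->
  (forall w, lti_io NK DK (fun k => y k w) (fun k => u k w)) ->
  (* v is a (real) random process, u has finite second moments *)
  (forall k, measurable_fun setT (v k)) ->
  (forall k, measurable_fun setT (u k)) ->
  (forall k, P.-integrable setT (fun w => ((u k w) ^+ 2)%:E)) ->
  A1_iid P tau p ->
  A2_indep P tau v ->
  forall k1 k2 : nat,
    (forall i : 'I_tb.+1,
      'E_P[fun w => (dsig alpha p tau u i k1 w * dsig alpha p tau u i k2 w)%R]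
      = ((k1 == k2)%:R * alpha i ^+ 2 * p i * (1 - p i))%:E
        * 'E_P[fun w => (u (k1%:Z - i%:Z) w ^+ 2)%R])%E
    /\
    (forall i1 i2 : 'I_tb.+1, i1 != i2 ->
      'E_P[fun w => (dsig alpha p tau u i1 k1 w * dsig alpha p tau u i2 k2 w)%R]
      = (- ((k1%:Z - i1%:Z == k2%:Z - i2%:Z)%:R
            * alpha i1 * alpha i2 * p i1 * p i2))%:E
        * 'E_P[fun w => (u (k1%:Z - i1%:Z) w ^+ 2)%R])%E.
Proof.
move=> _ plant_sp ctrl_p at_rest plant ctrl v_meas u_meas u_sq [tau_meas tau_iid]
  tau_v_indep k1 k2.
have E := expectation_dsigM tau_meas tau_iid tau_v_indep v_meas plant_sp ctrl_p
  at_rest plant ctrl u_meas u_sq.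
split => [i|i1 i2 i12]; rewrite E; congr (_%:E * _)%E.
  by rewrite eqxx mulr1n (inj_eq (addIr _)) eqz_nat; ring.
by rewrite (negbTE i12) mulr0n; ring.
Qed.
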